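(* Let $R$ be a Boolean algebra, $P(x_1,\ldots,x_n)$ a Boolean polynomial, $W$ a set and $w_1,\ldots,w_n\in W$. Then $G_P^W[w_1,\ldots,w_n](R)$ is an open subset of $(G(R)^W)^n$, and $G_P(R)$ is an open subset of $G(R)^n$.
   Context: Identify the family $2^R$ of all subsets of $R$ with $\{0,1\}^R$ with the product topology. $G(R)=\{(I^-,I^+)\in2^R\times2^R: I^-\text{ is an ideal of }R,\ I^+\text{ is a filter of }R,\ a\le b\text{ for all }a\in I^-,b\in I^+\}$, with the subspace topology; powers of $G(R)$ carry the product topology. $G_P(R)\subseteq G(R)^n$ is the set of all $((I_1^-,I_1^+),\ldots,(I_n^-,I_n^+))$ for which there exist $r_1^-,r_1^+,\ldots,r_n^-,r_n^+$ with $r_i^\varepsilon\in I_i^\varepsilon$ for all $i$ and $\varepsilon\in\{+,-\}$ and $P(r_1^{\varepsilon_1},\ldots,r_n^{\varepsilon_n})=0$ for every choice of signs $\varepsilon_i\in\{+,-\}$. $G_P^W[w_1,\ldots,w_n](R)\subseteq(G(R)^W)^n$ is the set of all $n$-tuples $\big((I_w^-(1),I_w^+(1))_{w\in W},\ldots,(I_w^-(n),I_w^+(n))_{w\in W}\big)$ for which there exist $r_1^-,r_1^+,\ldots,r_n^-,r_n^+$ with $r_i^\varepsilon\in I_{w_i}^\varepsilon(i)$ for all $i,\varepsilon$ and $P(r_1^{\varepsilon_1},\ldots,r_n^{\varepsilon_n})=0$ for every choice of signs $\varepsilon_i\in\{+,-\}$. *)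

From HB Require Import structures.
From mathcomp Require Import all_boot all_order all_algebra.
From mathcomp Require Import all_classical all_reals all_analysis.

Set Implicit Arguments.
Unset Strict Implicit.
Unset Printing Implicit Defensive.

Local Open Scope classical_set_scope.

(* A Boolean algebra is a complemented distributive lattice with top and
   bottom: [ctbDistrLatticeType d]. *)

Inductive bpoly (n : nat) : Type :=
  | BVar of 'I_n
  | BZero
  | BOne
  | BMeet of bpoly n & bpoly n
  | BJoin of bpoly n & bpoly n
  | BCompl of bpoly n.

Fixpoint bpoly_eval d (R : ctbDistrLatticeType d) (n : nat)
    (P : bpoly n) (x : 'I_n -> R) : R :=
  match P with
  | BVar i => x i
  | BZero => Order.bottom
  | BOne => Order.top
  | BMeet p q => Order.meet (bpoly_eval p x) (bpoly_eval q x)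
  | BJoin p q => Order.join (bpoly_eval p x) (bpoly_eval q x)
  | BCompl p => Order.compl (bpoly_eval p x)
  end.

(* 2^R identified with {0,1}^R, with the product topology. *)
Definition Pow2 d (R : ctbDistrLatticeType d) := {ptws R -> bool}.

Definition is_ideal d (R : ctbDistrLatticeType d) (I : R -> bool) : Prop :=
  [/\ exists a, I a,
      (forall a b, (b <= a)%O -> I a -> I b) &
      (forall a b, I a -> I b -> I (Order.join a b))].

Definition is_filter d (R : ctbDistrLatticeType d) (I : R -> bool) : Prop :=
  [/\ exists a, I a,
      (forall a b, (a <= b)%O -> I a -> I b) &
      (forall a b, I a -> I b -> I (Order.meet a b))].

Definition Gset d (R : ctbDistrLatticeType d) : set (Pow2 R * Pow2 R) :=
  [set I | is_ideal (I.1 : R -> bool) /\ is_filter (I.2 : R -> bool) /\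
           forall a b : R, (I.1 : R -> bool) a -> (I.2 : R -> bool) b -> (a <= b)%O].

Definition GR d (R : ctbDistrLatticeType d) := set_type (@Gset d R).

Definition Iminus d (R : ctbDistrLatticeType d) (I : GR R) : R -> bool :=
  (set_val I).1.
Definition Iplus d (R : ctbDistrLatticeType d) (I : GR R) : R -> bool :=
  (set_val I).2.

(* r_i^{eps_i}: eps i = true selects r_i^+, false selects r_i^-. *)
Definition sgn_pick d (R : ctbDistrLatticeType d) n
    (rm rp : 'I_n -> R) (eps : 'I_n -> bool) : 'I_n -> R :=
  fun i => if eps i then rp i else rm i.

Definition GP d (R : ctbDistrLatticeType d) n (P : bpoly n) :
    set {ptws 'I_n -> GR R} :=
  [set I | exists rm rp : 'I_n -> R,
     (forall i, Iminus (I i) (rm i) /\ Iplus (I i) (rp i)) /\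
     forall eps : 'I_n -> bool,
       bpoly_eval P (sgn_pick rm rp eps) = Order.bottom].

Definition GPW d (R : ctbDistrLatticeType d) n (P : bpoly n) (W : Type)
    (w : 'I_n -> W) : set {ptws 'I_n -> {ptws W -> GR R}} :=
  [set I | exists rm rp : 'I_n -> R,
     (forall i, Iminus (I i (w i)) (rm i) /\ Iplus (I i (w i)) (rp i)) /\
     forall eps : 'I_n -> bool,
       bpoly_eval P (sgn_pick rm rp eps) = Order.bottom].

From HB Require Import structures.
From mathcomp Require Import all_boot all_order all_algebra.
From mathcomp Require Import all_classical all_reals all_analysis.

(* Membership [r \in I] depends continuously on [I], the topology on 2^R
   being the product of discrete ones, so "r_i^- in I_i^- and r_i^+ in I_i^+
   for all i" is an open condition on I for each fixed choice of witnesses.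
   G_P and G_P^W are unions of such finite intersections over all witnesses
   annihilating P. *)

Local Open Scope classical_set_scope.

Lemma open_continuous_bool (T : topologicalType) (f : T -> bool) :
  continuous f -> open [set x | f x].
Proof.
move=> f_cont; have -> : [set x | f x] = f @^-1` [set true] by [].
by apply: open_comp; [move=> x _; exact: f_cont | exact: discrete_open].
Qed.

Lemma continuous_ptws_eval (I : Type) (X : topologicalType) (i : I) :
  continuous (fun f : {ptws I -> X} => f i).
Proof. exact: (@proj_continuous {classic I} (fun _ => X) i). Qed.

Section MembershipInGR.
Context (d : Order.disp_t) (R : ctbDistrLatticeType d).

Lemma continuous_Iminus (r : R) : continuous (fun I : GR R => Iminus I r).
Proof.
move=> I; apply: (@continuous_comp _ _ _ (@set_val _ (@Gset d R))
  (fun p : Pow2 R * Pow2 R => p.1 r)); first exact: initial_continuous.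
apply: (@continuous_comp _ _ _ fst (fun f : Pow2 R => f r)).
  exact: cvg_fst.
exact: continuous_ptws_eval.
Qed.

Lemma continuous_Iplus (r : R) : continuous (fun I : GR R => Iplus I r).
Proof.
move=> I; apply: (@continuous_comp _ _ _ (@set_val _ (@Gset d R))
  (fun p : Pow2 R * Pow2 R => p.2 r)); first exact: initial_continuous.
apply: (@continuous_comp _ _ _ snd (fun f : Pow2 R => f r)).
  exact: cvg_snd.
exact: continuous_ptws_eval.
Qed.

Lemma open_witnessed_membership (T : topologicalType) n (J : 'I_n -> T -> GR R)
    (Q : ('I_n -> R) -> ('I_n -> R) -> Prop) :
  (forall i, continuous (J i)) ->
  open [set x | exists rm rp : 'I_n -> R,
    (forall i, Iminus (J i x) (rm i) /\ Iplus (J i x) (rp i)) /\ Q rm rp].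
Proof.
move=> J_cont; rewrite openE => x [rm [rp [x_mem Qr]]].
have open_mem i :
    open [set y | Iminus (J i y) (rm i) /\ Iplus (J i y) (rp i)].
  apply: openI; apply: open_continuous_bool => y.
    exact: continuous_comp (J_cont i y) (continuous_Iminus _ _).
  exact: continuous_comp (J_cont i y) (continuous_Iplus _ _).
have : \forall y \near x, forall i,
    Iminus (J i y) (rm i) /\ Iplus (J i y) (rp i).
  apply: filter_forall => i; apply: open_nbhs_nbhs.
  by split; [exact: open_mem | exact: x_mem].
by apply: filterS => y y_mem; exists rm, rp.
Qed.

End MembershipInGR.

Theorem lemma4p3 (d : Order.disp_t) (R : ctbDistrLatticeType d) (n : nat)
    (P : bpoly n) (W : Type) (w : 'I_n -> W) :
  open (@GPW d R n P W w) /\ open (@GP d R n P).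
Proof.
split.
- apply: (@open_witnessed_membership d R _ n (fun i (I : {ptws 'I_n -> {ptws W -> GR R}}) =>
    I i (w i))) => i I.
  apply: (@continuous_comp _ _ _ (fun I : {ptws 'I_n -> {ptws W -> GR R}} => I i)
    (fun f : {ptws W -> GR R} => f (w i))); exact: continuous_ptws_eval.
- apply: (@open_witnessed_membership d R _ n (fun i (I : {ptws 'I_n -> GR R}) => I i)).
  exact: continuous_ptws_eval.
Qed.
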